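(* Let $M$ be a manifold of dimension $n\ge3$ with pseudo-Riemannian metric $g$, and let $(\nabla,g,\nabla^* )$ be a conjugate triple of torsion free connections. Let $q>0$ be a smooth function and let $(\nabla^\sharp,g^\sharp,\nabla^{*\sharp})$ be the gauge transformed triple. Denote by $R,R^*,R^\sharp,R^{\sharp*}$ the curvature tensors of $\nabla,\nabla^*,\nabla^\sharp,\nabla^{*\sharp}$ (the first two lowered with $g$, the last two with $g^\sharp$). Then the following are equivalent: (1) $\pi_3(R)=0$; (2) $\pi_3(R^* )=0$; (3) $\pi_3(R^\sharp)=0$; (4) $\pi_3(R^{\sharp*})=0$.
   Context: Conjugate triple: $u\,g(v,w)=g(\nabla_uv,w)+g(v,\nabla^*_uw)$ for all vector fields. Gauge transformation with transition function $q$: $g^\sharp=q\,g$; $\nabla^{*\sharp}_vw=\nabla^*_vw+(d\ln q)(v)w+(d\ln q)(w)v$; and $\nabla^\sharp$ is the connection for which $(\nabla^\sharp,g^\sharp,\nabla^{*\sharp})$ is conjugate. Curvature operator $\mathcal{R}(u,v)=\nabla_u\nabla_v-\nabla_v\nabla_u-\nabla_{[u,v]}$, curvature tensor $R(x,y,z,w)=h(\mathcal{R}(x,y)z,w)$ with $h$ the relevant metric. For such a tensor with metric $h$: $Ric(R)(x,y)=h^{ij}R(e_i,x,y,e_j)$, $\Lambda Ric(x,y)=\tfrac12[Ric(x,y)-Ric(y,x)]$, $(a\cdot b)(x,y,z,w)=a(x,y)b(z,w)$, $(a\wedge b)(x,y,z,w)=a(x,z)b(y,w)-a(y,z)b(x,w)$,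 and $\pi_3(R)=-\tfrac1{n+1}[2\Lambda Ric\cdot h+\Lambda Ric\wedge h]$. *)

(* Local coordinate formulation on an
   open subset U of R^n. *)
From HB Require Import structures.
From mathcomp Require Import all_boot all_order all_algebra.
From mathcomp Require Import all_classical all_reals topology normedtype derive.
Set Implicit Arguments. Unset Strict Implicit. Unset Printing Implicit Defensive.
Import Order.TTheory GRing.Theory Num.Theory.
Import numFieldNormedType.Exports.
Local Open Scope ring_scope.
Local Open Scope classical_set_scope.

Section Defs.
Variables (R : realType) (n : nat).

Notation pt := 'rV[R]_n.

Definition coordvec (i : 'I_n) : pt := delta_mx 0 i.

Definition partial (i : 'I_n) (f : pt -> R) (x : pt) : R :=
  derive (f : pt -> R^o) x (coordvec i).

Fixpoint iter_partial (s : seq 'I_n) (f : pt -> R) : pt -> R :=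
  match s with
  | [::] => f
  | i :: s' => partial i (iter_partial s' f)
  end.

Definition smooth_on (U : set pt) (f : pt -> R) : Prop :=
  forall (s : seq 'I_n) (x : pt), U x -> differentiable (iter_partial s f : pt -> R^o) x.

(* metric components h i j, Christoffel symbols G i j k with
   nabla_{d_i} d_j = \sum_k G i j k d_k *)
Definition metric_comp := 'I_n -> 'I_n -> pt -> R.
Definition christoffel := 'I_n -> 'I_n -> 'I_n -> pt -> R.

Definition gmat (h : metric_comp) (x : pt) : 'M[R]_n := \matrix_(i, j) h i j x.

Definition pseudo_riemannian (U : set pt) (h : metric_comp) : Prop :=
  [/\ forall i j, smooth_on U (h i j),
      forall i j x, U x -> h i j x = h j i x &
      forall x, U x -> \det (gmat h x) != 0].

Definition connection_on (U : set pt) (G : christoffel) : Prop :=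
  forall i j k, smooth_on U (G i j k).

Definition torsion_free (U : set pt) (G : christoffel) : Prop :=
  forall i j k x, U x -> G i j k x = G j i k x.

(* conjugate triple (G, h, Gs):  u h(v,w) = h(nabla_u v, w) + h(v, nabla*_u w)
   written on coordinate vector fields *)
Definition conjugate (U : set pt) (G : christoffel) (h : metric_comp)
    (Gs : christoffel) : Prop :=
  forall i j k x, U x ->
    partial i (h j k) x =
      \sum_l G i j l x * h l k x + \sum_l Gs i k l x * h j l x.

Definition gauge_metric (q : pt -> R) (h : metric_comp) : metric_comp :=
  fun i j x => q x * h i j x.

Definition dlnq (q : pt -> R) (i : 'I_n) (x : pt) : R := partial i q x / q x.

Definition kron (i j : 'I_n) : R := if i == j then 1 else 0.

Definition gauge_dual (q : pt -> R) (Gs : christoffel) : christoffel :=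
  fun i j k x => Gs i j k x + dlnq q i x * kron j k + dlnq q j x * kron i k.

(* curvature operator components:
   Rop(d_a, d_b) d_c = \sum_l curv_op G a b c l d_l *)
Definition curv_op (G : christoffel) (a b c l : 'I_n) (x : pt) : R :=
  partial a (G b c l) x - partial b (G a c l) x
  + \sum_k (G b c k x * G a k l x - G a c k x * G b k l x).

Definition curv (G : christoffel) (h : metric_comp) (a b c d : 'I_n) (x : pt) : R :=
  \sum_l curv_op G a b c l x * h l d x.

Definition ricci (G : christoffel) (h : metric_comp) (b c : 'I_n) (x : pt) : R :=
  \sum_i \sum_j invmx (gmat h x) i j * curv G h i b c j x.

Definition skew_ricci (G : christoffel) (h : metric_comp) (b c : 'I_n) (x : pt) : R :=
  (ricci G h b c x - ricci G h c b x) / 2.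

(* pi_3(R) = -1/(n+1) [ 2 LRic . h + LRic /\ h ] *)
Definition pi3 (G : christoffel) (h : metric_comp) (a b c d : 'I_n) (x : pt) : R :=
  - (n.+1%:R)^-1 *
    (2 * (skew_ricci G h a b x * h c d x)
     + (skew_ricci G h a c x * h b d x - skew_ricci G h b c x * h a d x)).

Definition pi3_vanishes (U : set pt) (G : christoffel) (h : metric_comp) : Prop :=
  forall x, U x -> forall a b c d, pi3 G h a b c d x = 0.

End Defs.

From HB Require Import structures.
From mathcomp Require Import all_boot all_order all_algebra.
From mathcomp Require Import all_classical all_reals topology normedtype derive.
From mathcomp Require Import landau ring lra.
Import Order.TTheory GRing.Theory Num.Theory.
Import numFieldNormedType.Exports.
Local Open Scope ring_scope.
Local Open Scope classical_set_scope.

(* For a torsion-free connection the skew part of the Ricci tensor is -1/2 d(alpha),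
   where alpha_c = Gamma^i_{ic}; since g is nondegenerate, pi_3(R) vanishes iff alpha
   is closed.  The four one-forms differ by exact forms: alpha + alpha^* = d ln|det g|
   for a conjugate pair, alpha^{*#} = alpha^* + (n+1) d ln q, and alpha^# = alpha - d ln q
   because Gamma^{#m}_{ij} = Gamma^m_{ij} - g_{ij} grad^m ln q.  Hence closedness, and
   with it the vanishing of pi_3, is shared by all four connections.  Exact forms are
   closed by the symmetry of second partial derivatives (Schwarz's theorem). *)

Section Schwarz.
Context {R : realType} {n : nat}.
Notation pt := 'rV[R]_n.

Lemma is_derive_line (f : pt -> R^o) (y e : pt) (s : R) :
  derivable f (y + s *: e) e ->
  is_derive s 1 (fun r : R => f (y + r *: e)) ('D_e f (y + s *: e)).
Proof.
move=> df.
have quotE : (fun h : R => h^-1 *: (((fun r => f (y + r *: e)) \o shift s) (h *: 1)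
                                     - f (y + s *: e)))
           = (fun h => h^-1 *: ((f \o shift (y + s *: e)) (h *: e) - f (y + s *: e))).
  apply: funext => h /=; congr (_ *: (f _ - _)).
  by rewrite [h *: 1]mulr1 scalerDl addrCA addrC.
by split; rewrite /derivable /derive quotE.
Qed.

Lemma second_difference_mvt {f : pt -> R} {y v e : pt} {t : R} : 0 < t ->
  (forall s, 0 <= s <= t -> differentiable (f : pt -> R^o) (y + v + s *: e)) ->
  (forall s, 0 <= s <= t -> differentiable (f : pt -> R^o) (y + s *: e)) ->
  exists2 s, 0 < s < t &
    f (y + v + t *: e) - f (y + t *: e) - (f (y + v) - f y)
    = t * ('D_e (f : pt -> R^o) (y + v + s *: e) - 'D_e (f : pt -> R^o) (y + s *: e)).
Proof.
move=> t0 df1 df2.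
pose phi s := f (y + v + s *: e) - f (y + s *: e).
pose dphi s := 'D_e (f : pt -> R^o) (y + v + s *: e) - 'D_e (f : pt -> R^o) (y + s *: e).
have Dphi s : 0 <= s <= t -> is_derive s 1 phi (dphi s).
  move=> st; apply: is_deriveB; apply: is_derive_line; apply: diff_derivable.
    exact: df1.
  exact: df2.
have [s sI] : exists2 s, s \in `]0, t[%R & phi t - phi 0 = dphi s * (t - 0).
  apply: (@MVT R phi dphi 0 t) => //.
    by move=> s; rewrite in_itv /= => /andP[s0 st]; apply: Dphi; rewrite !ltW.
  apply: derivable_within_continuous => s; rewrite in_itv /= => st.
  by have [] := Dphi _ st.
rewrite /phi !scale0r !addr0 subr0 mulrC => ->.
by exists s; first by move: sI; rewrite in_itv.
Qed.

Lemma differentiable_remainder_le {g : pt -> R^o} {x} {eps : R} :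
  differentiable g x -> 0 < eps -> exists2 d : R, 0 < d &
    forall v : pt, `|v| < d -> `|g (v + x) - (g x + 'd g x v)| <= eps * `|v|.
Proof.
move=> dg eps0.
have /eqaddoP /(_ eps eps0) /nbhs_norm0P [d d0 Hd] := diff_locally dg.
by exists d => // v /Hd.
Qed.

Lemma differential_increment_le {g : pt -> R^o} {x} {eps d : R} {v1 v2 : pt} :
  (forall v : pt, `|v| < d -> `|g (v + x) - (g x + 'd g x v)| <= eps * `|v|) ->
  `|v1| < d -> `|v2| < d ->
  `|g (v1 + x) - g (v2 + x) - 'd g x (v1 - v2)| <= eps * (`|v1| + `|v2|).
Proof.
move=> rem_le v1d v2d; rewrite linearB mulrDr.
have -> : g (v1 + x) - g (v2 + x) - ('d g x v1 - 'd g x v2)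
    = (g (v1 + x) - (g x + 'd g x v1)) - (g (v2 + x) - (g x + 'd g x v2)) by ring.
exact: le_trans (ler_normB _ _) (lerD (rem_le _ v1d) (rem_le _ v2d)).
Qed.

Lemma open_ball_around {U : set pt} {x} : open U -> U x ->
  exists2 d : R, 0 < d & forall h : pt, `|h| < d -> U (x + h).
Proof.
move=> oU Ux; have /nbhs0P /nbhs_norm0P [d d0 Hd] : \near x, U x.
  by apply: open_nbhs_nbhs; split.
by exists d => // h /Hd.
Qed.

Lemma normr_coordvec_le1 (i : 'I_n) : `|coordvec R i| <= 1.
Proof.
rewrite /Num.Def.normr /= mx_normrE; apply: bigmax_le => // -[a b] _ /=.
by rewrite /coordvec mxE; case: (_ && _); rewrite ?normr1 ?normr0.
Qed.

Lemma normr_coordvecZ_le (i : 'I_n) {s t : R} : 0 <= s <= t -> `|s *: coordvec R i| <= t.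
Proof.
move=> /andP[s0 st]; rewrite normrZ ger0_norm //.
by have := normr_coordvec_le1 i; have := normr_ge0 (coordvec R i); nra.
Qed.

Lemma second_difference_approx {U : set pt} {f : pt -> R} {x} {i} j {eps : R} :
  open U -> U x -> (forall y, U y -> differentiable (f : pt -> R^o) y) ->
  differentiable (partial i f : pt -> R^o) x -> 0 < eps ->
  exists2 d : R, 0 < d & forall t : R, 0 < t -> t < d ->
  `|f (x + t *: coordvec R j + t *: coordvec R i) - f (x + t *: coordvec R i)
     - (f (x + t *: coordvec R j) - f x) - t ^+ 2 * partial j (partial i f) x|
     <= eps * t ^+ 2.
Proof.
move=> oU Ux df dg eps0.
set ei := coordvec R i; set ej := coordvec R j; set g : pt -> R^o := partial i f.
have eps3 : 0 < eps / 3 by rewrite divr_gt0.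
have [d1 d10 rem_le] := differentiable_remainder_le dg eps3.
have [d2 d20 ballU] := open_ball_around oU Ux.
exists (Num.min d1 d2 / 2); first by rewrite divr_gt0 // lt_min d10.
move=> t t0; rewrite ltr_pdivlMr // lt_min => /andP[td1 td2].
have tt : 0 <= t <= t by rewrite lexx ltW.
have v1_le (s : R) : 0 <= s <= t -> `|t *: ej + s *: ei| <= t * 2.
  move=> st; apply: le_trans (ler_normD _ _) _.
  by have := normr_coordvecZ_le j tt; have := normr_coordvecZ_le i st; lra.
have v2_le (s : R) : 0 <= s <= t -> `|s *: ei| <= t * 2.
  by move=> st; have := normr_coordvecZ_le i st; lra.
have U1 (s : R) : 0 <= s <= t -> U (x + t *: ej + s *: ei).
  by move=> st; rewrite -addrA; apply: ballU; apply: le_lt_trans (v1_le s st) td2.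
have U2 (s : R) : 0 <= s <= t -> U (x + s *: ei).
  by move=> st; apply: ballU; apply: le_lt_trans (v2_le s st) td2.
have [s st mvt] := second_difference_mvt t0 (fun s st => df _ (U1 s st))
                                           (fun s st => df _ (U2 s st)).
have {}st : 0 <= s <= t by case/andP: st => s0 st; rewrite !ltW.
have -> : f (x + t *: ej + t *: ei) - f (x + t *: ei) - (f (x + t *: ej) - f x)
    = t * (g (x + t *: ej + s *: ei) - g (x + s *: ei)) := mvt.
rewrite /partial deriveE // -/ej.
have := differential_increment_le rem_le (le_lt_trans (v1_le s st) td1)
                                          (le_lt_trans (v2_le s st) td1).
rewrite addrK linearZ /= ![_ + x]addrC addrA => incr.
have -> : t * (g (x + t *: ej + s *: ei) - g (x + s *: ei)) - t ^+ 2 * 'd g x ej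
    = t * (g (x + t *: ej + s *: ei) - g (x + s *: ei) - t * 'd g x ej) by ring.
rewrite normrM (ger0_norm (ltW t0)) expr2 [eps * _]mulrCA ler_pM2l //.
apply: le_trans incr _.
have : `|t *: ej + s *: ei| + `|s *: ei| <= t * 3.
  by have := normr_coordvecZ_le i st; have := v1_le s st; lra.
by move/(ler_wpM2l (ltW eps3)); lra.
Qed.

Lemma partialC_at {U : set pt} {f : pt -> R} {x} (i j : 'I_n) :
  open U -> U x -> (forall y, U y -> differentiable (f : pt -> R^o) y) ->
  differentiable (partial i f : pt -> R^o) x ->
  differentiable (partial j f : pt -> R^o) x ->
  partial j (partial i f) x = partial i (partial j f) x.
Proof.
move=> oU Ux df di dj.
set A := partial j _ x; set B := partial i _ x.
apply/eqP; rewrite -subr_eq0 -normr_eq0 eq_le normr_ge0 andbT.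
apply/ler_addgt0Pr => e e0; rewrite add0r.
have e2 : 0 < e / 2 by rewrite divr_gt0.
have [d1 d10 approx_ij] := second_difference_approx j oU Ux df di e2.
have [d2 d20 approx_ji] := second_difference_approx i oU Ux df dj e2.
pose t := Num.min d1 d2 / 2.
have t0 : 0 < t by rewrite divr_gt0 // lt_min d10.
have /andP[td1 td2] : (t < d1) && (t < d2).
  by rewrite -lt_min /t ltr_pdivrMr // ltr_pMr ?ltr1n // lt_min d10.
have := approx_ij t t0 td1; have := approx_ji t t0 td2.
set ei := coordvec R i; set ej := coordvec R j.
have -> : f (x + t *: ej + t *: ei) - f (x + t *: ei) - (f (x + t *: ej) - f x)
    = f (x + t *: ei + t *: ej) - f (x + t *: ej) - (f (x + t *: ei) - f x).
  by rewrite [x + t *: ej + _]addrAC; ring.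
set D := f _ - _ - _ => DB DA.
have : `|t ^+ 2 * (A - B)| <= e * t ^+ 2.
  have -> : t ^+ 2 * (A - B) = (D - t ^+ 2 * B) - (D - t ^+ 2 * A) by ring.
  apply: le_trans (ler_normB _ _) _.
  by apply: le_trans (lerD DB DA) _; rewrite -mulrDl -splitr.
rewrite normrM (ger0_norm (exprn_ge0 2 (ltW t0))) [_ * `|_|]mulrC.
by rewrite ler_pM2r // exprn_gt0.
Qed.

Lemma partialC {U : set pt} {f : pt -> R} (i j : 'I_n) {x} :
  open U -> smooth_on U f -> U x ->
  partial j (partial i f) x = partial i (partial j f) x.
Proof.
move=> oU sf Ux; apply: partialC_at oU Ux _ (sf [:: i] x Ux) (sf [:: j] x Ux).
by move=> y Uy; apply: (sf [::] y Uy).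
Qed.

End Schwarz.

Section PartialDerivatives.
Context {R : realType} {n : nat}.
Notation pt := 'rV[R]_n.
Implicit Types (f g : pt -> R) (x : pt) (i : 'I_n) (U : set pt).

Definition has_partial i f x := derivable (f : pt -> R^o) x (coordvec R i).

Lemma has_partial_cst i (c : R) x : has_partial i (fun _ => c) x.
Proof. exact: derivable_cst. Qed.

Lemma partial_cst i (c : R) x : partial i (fun _ => c) x = 0.
Proof. exact: derive_cst. Qed.

Lemma has_partialD {i f g x} : has_partial i f x -> has_partial i g x ->
  has_partial i (fun y => f y + g y) x.
Proof. exact: derivableD. Qed.

Lemma partialD {i f g x} : has_partial i f x -> has_partial i g x ->
  partial i (fun y => f y + g y) x = partial i f x + partial i g x.
Proof. exact: deriveD. Qed.

Lemma partialB {i f g x} : has_partial i f x -> has_partial i g x ->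
  partial i (fun y => f y - g y) x = partial i f x - partial i g x.
Proof. exact: deriveB. Qed.

Lemma has_partialM {i f g x} : has_partial i f x -> has_partial i g x ->
  has_partial i (fun y => f y * g y) x.
Proof. exact: derivableM. Qed.

Lemma partialM {i f g x} : has_partial i f x -> has_partial i g x ->
  partial i (fun y => f y * g y) x = partial i f x * g x + f x * partial i g x.
Proof. by move=> df dg; rewrite /partial (deriveM df dg) addrC mulrC. Qed.

Lemma has_partialV {i f x} : f x != 0 -> has_partial i f x ->
  has_partial i (fun y => (f y)^-1) x.
Proof. exact: derivableV. Qed.

Lemma partialV {i f x} : f x != 0 -> has_partial i f x ->
  partial i (fun y => (f y)^-1) x = - partial i f x / f x ^+ 2.
Proof.
move=> fx0 df; rewrite /partial (deriveV fx0 df).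
by rewrite -[_ *: _]/(_ * _) mulrC mulrN mulNr.
Qed.

Lemma has_partial_sum {I : Type} (r : seq I) (P : pred I) (F : I -> pt -> R) i x :
  (forall k, P k -> has_partial i (F k) x) ->
  has_partial i (fun y => \sum_(k <- r | P k) F k y) x.
Proof.
move=> dF; rewrite -fct_sumE.
by elim/big_ind: _ => [|f g|k /dF //]; [exact: has_partial_cst | exact: has_partialD].
Qed.

Lemma partial_sum {I : Type} (r : seq I) (P : pred I) (F : I -> pt -> R) i x :
  (forall k, P k -> has_partial i (F k) x) ->
  partial i (fun y => \sum_(k <- r | P k) F k y) x
  = \sum_(k <- r | P k) partial i (F k) x.
Proof.
move=> dF; rewrite -fct_sumE; elim: r => [|a r IH]; first by rewrite !big_nil partial_cst.
rewrite !big_cons; case: ifP => Pa //.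
by rewrite partialD ?IH //; [exact: dF | rewrite fct_sumE; exact: has_partial_sum].
Qed.

Lemma has_partial_sum_ord {m : nat} {F : 'I_m -> pt -> R} {i x} :
  (forall k, has_partial i (F k) x) -> has_partial i (fun y => \sum_k F k y) x.
Proof. by move=> dF; apply: has_partial_sum => k _; exact: dF. Qed.

Lemma partial_sum_ord {m : nat} {F : 'I_m -> pt -> R} {i x} :
  (forall k, has_partial i (F k) x) ->
  partial i (fun y => \sum_k F k y) x = \sum_k partial i (F k) x.
Proof. by move=> dF; apply: partial_sum => k _; exact: dF. Qed.

Lemma has_partial_prod {I : Type} (r : seq I) (P : pred I) (F : I -> pt -> R) i x :
  (forall k, P k -> has_partial i (F k) x) ->
  has_partial i (fun y => \prod_(k <- r | P k) F k y) x.
Proof.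
move=> dF; rewrite -fct_prodE.
by elim/big_ind: _ => [|f g|k /dF //]; [exact: has_partial_cst | exact: has_partialM].
Qed.

Lemma partial_eq_on {U f g} i {x} : open U -> U x ->
  (forall y, U y -> f y = g y) -> partial i f x = partial i g x.
Proof.
move=> oU Ux fg; apply: near_eq_derive; near=> y; apply: fg; near: y.
by apply: open_nbhs_nbhs; split.
Unshelve. all: by end_near.
Qed.

Lemma has_partial_eq_on {U f g i x} : open U -> U x ->
  (forall y, U y -> f y = g y) -> has_partial i f x -> has_partial i g x.
Proof.
move=> oU Ux fg; apply: near_eq_derivable; near=> y; apply: fg; near: y.
by apply: open_nbhs_nbhs; split.
Unshelve. all: by end_near.
Qed.

Lemma smooth_partial {U f} i : smooth_on U f -> smooth_on U (partial i f).
Proof.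
move=> sf s y Uy.
have -> : iter_partial s (partial i f) = iter_partial (rcons s i) f.
  by elim: s {Uy} => //= a s ->.
exact: sf.
Qed.

Lemma smooth_has_partial {U f} i {x} : smooth_on U f -> U x -> has_partial i f x.
Proof. by move=> sf Ux; apply: diff_derivable; apply: (sf [::] x Ux). Qed.

Lemma has_partial_det {m : nat} {M : pt -> 'M[R]_m} {i x} :
  (forall a b, has_partial i (fun y => M y a b) x) ->
  has_partial i (fun y => \det (M y)) x.
Proof.
move=> dM; apply: has_partial_sum => s _; apply: has_partialM.
  exact: has_partial_cst.
by apply: has_partial_prod => a _; apply: dM.
Qed.

Lemma has_partial_invmx {U} {M : pt -> 'M[R]_n} {i x} a b :
  open U -> U x -> (forall y, U y -> \det (M y) != 0) ->
  (forall a b, has_partial i (fun y => M y a b) x) ->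
  has_partial i (fun y => invmx (M y) a b) x.
Proof.
move=> oU Ux detM dM.
apply: (has_partial_eq_on (f := fun y => (\det (M y))^-1 * cofactor (M y) b a) oU Ux).
  by move=> y Uy; rewrite /invmx unitmxE unitfE detM // !mxE.
apply: has_partialM; first exact: has_partialV (detM _ Ux) (has_partial_det dM).
apply: has_partialM; first exact: has_partial_cst.
apply: has_partial_det => c d.
have -> : (fun y => row' b (col' a (M y)) c d) = (fun y => M y (lift b c) (lift a d)).
  by apply/funext => y; rewrite !mxE.
exact: dM.
Qed.

End PartialDerivatives.

Section SkewRicci.
Context {R : realType} {n : nat}.
Notation pt := 'rV[R]_n.
Implicit Types (U : set pt) (Ga : christoffel R n) (h : metric_comp R n) (x : pt).

Lemma sum_mul_delta (F : 'I_n -> R) k : \sum_l F l * (k == l)%:R = F k.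
Proof.
rewrite (bigD1 k) //= eqxx mulr1 big1 ?addr0 // => l /negbTE.
by rewrite eq_sym => ->; rewrite mulr0.
Qed.

Lemma kronE (i j : 'I_n) : kron R i j = (i == j)%:R.
Proof. by rewrite /kron; case: eqP. Qed.

Lemma solve_row_invmx {M : 'M[R]_n} {u v : 'I_n -> R} : \det M != 0 ->
  (forall k, \sum_l u l * M l k = v k) -> forall m, u m = \sum_k v k * invmx M k m.
Proof.
move=> detM uMv m.
have uM : M \in unitmx by rewrite unitmxE unitfE.
have E : (\row_l u l) *m M = \row_k v k.
  by apply/matrixP => a k; rewrite !mxE -uMv; apply: eq_bigr => l _; rewrite mxE.
have := congr1 (fun X => (X *m invmx M) 0 m) E.
by rewrite /= mulmxK // !mxE => ->; apply: eq_bigr => k _; rewrite mxE.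
Qed.

Lemma det_neq0_row_entry {A : 'M[R]_n} i : \det A != 0 -> exists j, A i j != 0.
Proof.
move=> detA; apply/existsP; apply: contraNT detA => /existsPn A0.
by rewrite (expand_det_row _ i) big1 // => j _; move/negPn: (A0 j) => /eqP ->; rewrite mul0r.
Qed.

(* d_b of the contracted Christoffel one-form c |-> Ga^i_{ic}, taken termwise. *)
Definition dtrace Ga (b c : 'I_n) x : R := \sum_i partial b (Ga i c i) x.

Definition dtrace_sym U Ga : Prop :=
  forall x, U x -> forall b c, dtrace Ga b c x = dtrace Ga c b x.

Lemma ricciE Ga h b c x : (forall i j, h i j x = h j i x) -> \det (gmat h x) != 0 ->
  ricci Ga h b c x = \sum_i curv_op Ga i b c i x.
Proof.
move=> hsym hdet; rewrite /ricci /curv; apply: eq_bigr => i _.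
transitivity (\sum_l curv_op Ga i b c l x * (invmx (gmat h x) *m gmat h x) i l).
  under eq_bigr do rewrite mulr_sumr; rewrite exchange_big.
  apply: eq_bigr => l _ /=; rewrite mxE mulr_sumr.
  by apply: eq_bigr => j _ /=; rewrite hsym !mxE; ring.
rewrite mulVmx ?unitmxE ?unitfE //.
by under eq_bigr do rewrite mxE; rewrite sum_mul_delta.
Qed.

Lemma skew_ricciE {U Ga h} b c {x} : open U -> U x -> torsion_free U Ga ->
  (forall i j, h i j x = h j i x) -> \det (gmat h x) != 0 ->
  skew_ricci Ga h b c x = - (dtrace Ga b c x - dtrace Ga c b x) / 2.
Proof.
move=> oU Ux tf hsym hdet; rewrite /skew_ricci !ricciE //.
pose Q b c := \sum_i \sum_k (Ga b c k x * Ga i k i x - Ga i c k x * Ga b k i x).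
have QC : Q b c = Q c b.
  rewrite /Q; under eq_bigr do rewrite sumrB; under [RHS]eq_bigr do rewrite sumrB.
  rewrite !sumrB; congr (_ - _).
    by apply: eq_bigr => i _; apply: eq_bigr => k _; rewrite tf.
  rewrite [RHS]exchange_big; apply: eq_bigr => i _; apply: eq_bigr => k _ /=.
  by rewrite (tf i c) // (tf b k) // mulrC.
have -> : \sum_i curv_op Ga i b c i x - \sum_i curv_op Ga i c b i x
    = \sum_i (partial c (Ga i b i) x - partial b (Ga i c i) x) + (Q b c - Q c b).
  rewrite /Q -!sumrB -big_split /=; apply: eq_bigr => i _; rewrite /curv_op.
  rewrite (partial_eq_on i oU Ux (fun y Uy => tf b c i y Uy)); ring.
by rewrite QC subrr addr0 sumrB /dtrace; ring.
Qed.

Lemma pi3_eq0_skew_ricci Ga h x : \det (gmat h x) != 0 ->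
  (forall a b c d, pi3 Ga h a b c d x = 0) <-> (forall a b, skew_ricci Ga h a b x = 0).
Proof.
move=> hdet; split => [pi30 a b|S0 a b c d]; last by rewrite /pi3 !S0; ring.
(* Take c = b, which kills the first term of pi3, and d with h b d != 0. *)
have [d hbd] := det_neq0_row_entry b hdet; rewrite mxE in hbd.
have Sbb : skew_ricci Ga h b b x = 0 by rewrite /skew_ricci subrr mul0r.
have : skew_ricci Ga h a b x * (- 3%:R * h b d x / n.+1%:R) = 0.
  by rewrite -(pi30 a b b d) /pi3 Sbb; ring.
move/eqP; rewrite mulf_eq0 => /orP[/eqP //|].
by rewrite !mulf_eq0 invr_eq0 oppr_eq0 !pnatr_eq0 (negbTE hbd).
Qed.

Lemma pi3_vanishesE {U Ga h} : open U -> torsion_free U Ga ->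
  (forall i j x, U x -> h i j x = h j i x) ->
  (forall x, U x -> \det (gmat h x) != 0) ->
  pi3_vanishes U Ga h <-> dtrace_sym U Ga.
Proof.
move=> oU tf hsym hdet.
have skewE x b c : U x -> skew_ricci Ga h b c x = - (dtrace Ga b c x - dtrace Ga c b x) / 2.
  by move=> Ux; apply: (skew_ricciE b c oU Ux tf (fun i j => hsym i j x Ux) (hdet x Ux)).
split=> [pi30 x Ux b c|dsym x Ux].
  have /eqP := (pi3_eq0_skew_ricci Ga h x (hdet x Ux)).1 (pi30 x Ux) b c.
  by rewrite skewE // mulf_eq0 invr_eq0 pnatr_eq0 orbF oppr_eq0 subr_eq0 => /eqP.
apply/(pi3_eq0_skew_ricci Ga h x (hdet x Ux)) => b c.
by rewrite skewE // dsym // subrr oppr0 mul0r.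
Qed.

Lemma dtrace_sym_affine {U Ga Ga'} (a : R) (w : 'I_n -> 'I_n -> pt -> R) : a != 0 ->
  (forall x, U x -> forall b c, w b c x = w c b x) ->
  (forall x, U x -> forall b c, dtrace Ga' b c x = a * dtrace Ga b c x + w b c x) ->
  dtrace_sym U Ga <-> dtrace_sym U Ga'.
Proof.
move=> a0 wsym E; split=> dsym x Ux b c; first by rewrite !E // dsym // wsym.
apply: (mulfI a0); apply: (addIr (w b c x)).
by rewrite -E // dsym // E // wsym.
Qed.

End SkewRicci.

Section ConjugatePair.
Context {R : realType} {n : nat}.
Notation pt := 'rV[R]_n.

Definition dgmat (h : metric_comp R n) (c : 'I_n) (y : pt) : 'M[R]_n :=
  \matrix_(j, k) partial c (h j k) y.

(* [dlogdet h c] = tr(h^{-1} d_c h) is d_c ln|det h| (Jacobi's formula). *)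
Definition dlogdet (h : metric_comp R n) (c : 'I_n) (y : pt) : R :=
  \tr (invmx (gmat h y) *m dgmat h c y).

Context {U : set pt} {g : metric_comp R n}.
Hypotheses (oU : open U) (g_smooth : forall i j, smooth_on U (g i j))
  (g_det : forall x, U x -> \det (gmat g x) != 0).

Lemma has_partial_gmat b {x} : U x -> forall a e, has_partial b (fun y => gmat g y a e) x.
Proof.
move=> Ux a e; have -> : (fun y => gmat g y a e) = g a e by apply/funext => y; rewrite mxE.
exact: (smooth_has_partial b (g_smooth a e) Ux).
Qed.

Lemma has_partial_invmx_gmat b k j {x} : U x ->
  has_partial b (fun y => invmx (gmat g y) k j) x.
Proof. by move=> Ux; exact: (has_partial_invmx k j oU Ux g_det (has_partial_gmat b Ux)). Qed.

Lemma trace_christoffel_conjugate {G Gs : christoffel R n} c {y} : U y ->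
  torsion_free U G -> torsion_free U Gs -> conjugate U G g Gs ->
  \sum_i G i c i y + \sum_i Gs i c i y = dlogdet g c y.
Proof.
move=> Uy tG tGs conjG.
have unitH : gmat g y \in unitmx by rewrite unitmxE unitfE g_det.
pose Mc : 'M[R]_n := \matrix_(j, l) G c j l y.
pose Nc : 'M[R]_n := \matrix_(k, l) Gs c k l y.
rewrite /dlogdet; have -> : dgmat g c y = Mc *m gmat g y + gmat g y *m Nc^T.
  apply/matrixP => j k; rewrite !mxE (conjG c j k y Uy); congr (_ + _).
    by apply: eq_bigr => l _; rewrite !mxE.
  by apply: eq_bigr => l _; rewrite !mxE mulrC.
rewrite mulmxDr mxtraceD mxtrace_mulC -mulmxA mulmxV // mulmx1.
rewrite mulmxA mulVmx // mul1mx mxtrace_tr /mxtrace.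
by congr (_ + _); apply: eq_bigr => i _; rewrite mxE; [exact: tG | exact: tGs].
Qed.

Lemma partial_invmx b {x} : U x ->
  \matrix_(k, j) partial b (fun y => invmx (gmat g y) k j) x
  = - (invmx (gmat g x) *m dgmat g b x *m invmx (gmat g x)).
Proof.
move=> Ux; set P := \matrix_(k, j) _.
have unitH y : U y -> gmat g y \in unitmx by move=> Uy; rewrite unitmxE unitfE g_det.
have dinv k j := has_partial_invmx_gmat b k j Ux.
have PH : P *m gmat g x = - (invmx (gmat g x) *m dgmat g b x).
  apply/matrixP => k m; rewrite [RHS]mxE; apply/eqP; rewrite -addr_eq0; apply/eqP.
  have dterm j : has_partial b (fun y => invmx (gmat g y) k j * g j m y) x.
    exact: (has_partialM (dinv k j) (smooth_has_partial b (g_smooth j m) Ux)).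
  have sum0 : \sum_j partial b (fun y => invmx (gmat g y) k j * g j m y) x = 0.
    rewrite -(partial_sum_ord dterm).
    rewrite (partial_eq_on (g := fun _ => (1%:M : 'M[R]_n) k m) b oU Ux) ?partial_cst //.
    by move=> y Uy; rewrite -(mulVmx (unitH y Uy)) mxE; apply: eq_bigr => j _; rewrite mxE.
  apply: (etrans _ sum0); rewrite !mxE -big_split; apply: eq_bigr => j _.
  rewrite !mxE; exact: esym (partialM (dinv k j) (smooth_has_partial b (g_smooth j m) Ux)).
by rewrite -[P](mulmxK (unitH x Ux)) PH mulNmx.
Qed.

Lemma partial_dlogdet b c {x} : U x ->
  partial b (dlogdet g c) x
  = - \tr (invmx (gmat g x) *m dgmat g b x *m invmx (gmat g x) *m dgmat g c x)
    + \tr (invmx (gmat g x) *m \matrix_(j, k) partial b (partial c (g j k)) x).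
Proof.
move=> Ux.
have dinv k j := has_partial_invmx_gmat b k j Ux.
have dgc j k : has_partial b (partial c (g j k)) x :=
  smooth_has_partial b (smooth_partial c (g_smooth j k)) Ux.
have dterm k j : has_partial b (fun y => invmx (gmat g y) k j * partial c (g j k) y) x :=
  has_partialM (dinv k j) (dgc j k).
have drow k : has_partial b (fun y => \sum_j invmx (gmat g y) k j * partial c (g j k) y) x :=
  has_partial_sum_ord (dterm k).
have -> : dlogdet g c = fun y => \sum_k \sum_j invmx (gmat g y) k j * partial c (g j k) y.
  apply/funext => y; rewrite /dlogdet /mxtrace; apply: eq_bigr => k _.
  by rewrite mxE; apply: eq_bigr => j _; rewrite mxE.
rewrite (partial_sum_ord drow).
have -> : - \tr (invmx (gmat g x) *m dgmat g b x *m invmx (gmat g x) *m dgmat g c x)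
    = \tr (\matrix_(k, j) partial b (fun y => invmx (gmat g y) k j) x *m dgmat g c x).
  by rewrite (partial_invmx b Ux) mulNmx linearN.
rewrite /mxtrace -big_split; apply: eq_bigr => k _.
rewrite (partial_sum_ord (dterm k)) !mxE -big_split.
apply: eq_bigr => j _; rewrite !mxE; exact: partialM (dinv k j) (dgc j k).
Qed.

Lemma mxtrace_sandwichC (H A B : 'M[R]_n) :
  \tr (H *m A *m H *m B) = \tr (H *m B *m H *m A).
Proof. by rewrite -(mulmxA (H *m A)) mxtrace_mulC !mulmxA. Qed.

Lemma partial_dlogdetC b c {x} : U x ->
  partial b (dlogdet g c) x = partial c (dlogdet g b) x.
Proof.
move=> Ux; apply: (etrans (partial_dlogdet b c Ux)).
apply: (etrans _ (esym (partial_dlogdet c b Ux))).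
apply: (f_equal2 (fun u v => - u + v)); first exact: mxtrace_sandwichC.
apply: (congr1 (fun M => \tr (invmx (gmat g x) *m M))); apply/matrixP => j k.
by rewrite [LHS]mxE [RHS]mxE; exact: (partialC c b oU (g_smooth j k) Ux).
Qed.

Lemma dtrace_conjugate {G Gs : christoffel R n} b c {x} : U x ->
  connection_on U G -> connection_on U Gs -> torsion_free U G -> torsion_free U Gs ->
  conjugate U G g Gs -> dtrace G b c x + dtrace Gs b c x = partial b (dlogdet g c) x.
Proof.
move=> Ux cG cGs tG tGs conjG.
have dG i : has_partial b (G i c i) x := smooth_has_partial b (cG i c i) Ux.
have dGs i : has_partial b (Gs i c i) x := smooth_has_partial b (cGs i c i) Ux.
have sumG := partial_sum_ord dG.
have sumGs := partial_sum_ord dGs.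
rewrite /dtrace; apply: esym.
apply: (etrans (partial_eq_on b oU Ux
  (fun y Uy => esym (trace_christoffel_conjugate c Uy tG tGs conjG)))).
apply: (etrans (partialD (has_partial_sum_ord dG)
                         (has_partial_sum_ord dGs))).
exact: (f_equal2 +%R sumG sumGs).
Qed.

Lemma dtrace_sym_conjugate {G Gs : christoffel R n} :
  connection_on U G -> connection_on U Gs -> torsion_free U G -> torsion_free U Gs ->
  conjugate U G g Gs -> dtrace_sym U G <-> dtrace_sym U Gs.
Proof.
move=> cG cGs tG tGs conjG.
apply: (dtrace_sym_affine (-1) (fun b c x => partial b (dlogdet g c) x)).
- by rewrite oppr_eq0 oner_eq0.
- by move=> x Ux b c; exact: (partial_dlogdetC b c Ux).
move=> x Ux b c; rewrite -(dtrace_conjugate b c Ux cG cGs tG tGs conjG); ring.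
Qed.

End ConjugatePair.

Section GaugeTransformation.
Context {R : realType} {n : nat}.
Notation pt := 'rV[R]_n.

Definition grad_ln (h : metric_comp R n) (q : pt -> R) (m : 'I_n) (y : pt) : R :=
  \sum_k dlnq q k y * invmx (gmat h y) k m.

Context {U : set pt} {g : metric_comp R n} {q : pt -> R}.
Hypotheses (oU : open U) (g_smooth : forall i j, smooth_on U (g i j))
  (g_sym : forall i j x, U x -> g i j x = g j i x)
  (g_det : forall x, U x -> \det (gmat g x) != 0)
  (q_smooth : smooth_on U q) (q_neq0 : forall x, U x -> q x != 0).

Lemma has_partial_dlnq i c {x} : U x -> has_partial i (dlnq q c) x.
Proof.
move=> Ux; apply: has_partialM (smooth_has_partial i (smooth_partial c q_smooth) Ux) _.
exact: has_partialV (q_neq0 _ Ux) (smooth_has_partial i q_smooth Ux).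
Qed.

Lemma partial_dlnqC b c x : U x -> partial b (dlnq q c) x = partial c (dlnq q b) x.
Proof.
move=> Ux; have dq i : has_partial i q x := smooth_has_partial i q_smooth Ux.
have dpq i j : has_partial i (partial j q) x :=
  smooth_has_partial i (smooth_partial j q_smooth) Ux.
have dqV i : has_partial i (fun y => (q y)^-1) x := has_partialV (q_neq0 _ Ux) (dq i).
rewrite /dlnq (partialM (dpq b c) (dqV b)) (partialM (dpq c b) (dqV c)).
rewrite (partialV (q_neq0 _ Ux) (dq b)) (partialV (q_neq0 _ Ux) (dq c)).
by rewrite (partialC b c oU q_smooth Ux); field; exact: q_neq0.
Qed.

Lemma dtrace_gauge_dual {Gs : christoffel R n} b c x :
  connection_on U Gs -> U x ->
  dtrace (gauge_dual q Gs) b c x = dtrace Gs b c x + n.+1%:R * partial b (dlnq q c) x.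
Proof.
move=> cGs Ux.
have dl i : has_partial b (dlnq q i) x := has_partial_dlnq b i Ux.
have dlk i (k : R) : has_partial b (fun y => dlnq q i y * k) x.
  exact: has_partialM (dl i) (has_partial_cst b k x).
have partial_term i : partial b (gauge_dual q Gs i c i) x
    = partial b (Gs i c i) x + partial b (dlnq q i) x * kron R c i + partial b (dlnq q c) x.
  have dG : has_partial b (Gs i c i) x := smooth_has_partial b (cGs i c i) Ux.
  rewrite /gauge_dual (partialD (has_partialD dG (dlk i (kron R c i))) (dlk c (kron R i i))).
  rewrite (partialD dG (dlk i (kron R c i))); congr (_ + _ + _).
    apply: (etrans (partialM (dl i) (has_partial_cst b (kron R c i) x))).
    by rewrite partial_cst mulr0 addr0.
  apply: (etrans (partialM (dl c) (has_partial_cst b (kron R i i) x))).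
  by rewrite partial_cst mulr0 addr0 kronE eqxx mulr1.
rewrite /dtrace (eq_bigr _ (fun i _ => partial_term i)) !big_split /=.
under [X in _ + X + _]eq_bigr do rewrite kronE.
by rewrite sum_mul_delta sumr_const card_ord mulr_natl mulrS; ring.
Qed.

Lemma gauge_conjugate_lowered {G Gs Gsh : christoffel R n} i j k {y} : U y ->
  conjugate U G g Gs -> conjugate U Gsh (gauge_metric q g) (gauge_dual q Gs) ->
  \sum_l (Gsh i j l y - G i j l y) * g l k y = - (dlnq q k y * g j i y).
Proof.
(* Expand the gauged conjugacy identity and cancel q times the original one. *)
move=> Uy conjG conjGsh; have qy := q_neq0 _ Uy.
have := conjGsh i j k y Uy.
have -> : partial i (gauge_metric q g j k) y
    = partial i q y * g j k y + q y * partial i (g j k) y.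
  exact: partialM (smooth_has_partial i q_smooth Uy) (smooth_has_partial i (g_smooth j k) Uy).
rewrite (conjG i j k y Uy).
have metricE : \sum_l Gsh i j l y * gauge_metric q g l k y
    = q y * \sum_l Gsh i j l y * g l k y.
  by rewrite mulr_sumr; apply: eq_bigr => l _; rewrite /gauge_metric /=; ring.
have dq : dlnq q i y * q y = partial i q y by rewrite /dlnq divfK.
have dualE : \sum_l gauge_dual q Gs i k l y * gauge_metric q g j l y
    = q y * \sum_l Gs i k l y * g j l y + partial i q y * g j k y
      + q y * (dlnq q k y * g j i y).
  rewrite (eq_bigr (fun l => q y * (Gs i k l y * g j l y)
                       + dlnq q i y * q y * g j l y * (k == l)%:R
                       + q y * (dlnq q k y * g j l y) * (i == l)%:R)); last first.
    by move=> l _; rewrite /gauge_dual /gauge_metric !kronE; ring.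
  by rewrite !big_split /= !sum_mul_delta -mulr_sumr dq.
rewrite metricE dualE => E.
under eq_bigr do rewrite mulrBl; rewrite sumrB.
by apply: (mulfI qy); move: E; lra.
Qed.

Lemma gauge_christoffelE {G Gs Gsh : christoffel R n} i j m {y} : U y ->
  conjugate U G g Gs -> conjugate U Gsh (gauge_metric q g) (gauge_dual q Gs) ->
  Gsh i j m y = G i j m y - g j i y * grad_ln g q m y.
Proof.
move=> Uy conjG conjGsh.
have lowered k : \sum_l (Gsh i j l y - G i j l y) * gmat g y l k = - (dlnq q k y * g j i y).
  rewrite -(gauge_conjugate_lowered i j k Uy conjG conjGsh).
  by apply: eq_bigr => l _; rewrite mxE.
have /= sol := solve_row_invmx (g_det _ Uy) lowered m.
have -> : Gsh i j m y = G i j m y + (Gsh i j m y - G i j m y) by rewrite addrC subrK.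
rewrite sol /grad_ln mulr_sumr -sumrN; congr (_ + _).
by apply: eq_bigr => k _; ring.
Qed.

Lemma torsion_free_gauge_christoffel {G Gs Gsh : christoffel R n} :
  torsion_free U G -> conjugate U G g Gs ->
  conjugate U Gsh (gauge_metric q g) (gauge_dual q Gs) -> torsion_free U Gsh.
Proof.
move=> tG conjG conjGsh i j k y Uy.
by rewrite !(gauge_christoffelE _ _ k Uy conjG conjGsh) tG // g_sym.
Qed.

Lemma has_partial_grad_ln b m {x} : U x -> has_partial b (grad_ln g q m) x.
Proof.
move=> Ux; apply: has_partial_sum => k _; apply: has_partialM.
  exact: (has_partial_dlnq b k Ux).
exact: (has_partial_invmx_gmat oU g_smooth g_det b k m Ux).
Qed.

Lemma sum_g_grad_ln c {y} : U y -> \sum_i g c i y * grad_ln g q i y = dlnq q c y.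
Proof.
move=> Uy; rewrite /grad_ln.
under eq_bigr do rewrite mulr_sumr; rewrite exchange_big /=.
transitivity (\sum_k dlnq q k y * (invmx (gmat g y) *m gmat g y) k c).
  apply: eq_bigr => k _; rewrite mxE mulr_sumr; apply: eq_bigr => i _ /=.
  by rewrite mxE g_sym //; ring.
rewrite mulVmx ?unitmxE ?unitfE ?g_det //.
by under eq_bigr do rewrite mxE eq_sym; rewrite sum_mul_delta.
Qed.

Lemma dtrace_gauge_conjugate {G Gs Gsh : christoffel R n} b c {x} : U x ->
  connection_on U G -> conjugate U G g Gs ->
  conjugate U Gsh (gauge_metric q g) (gauge_dual q Gs) ->
  dtrace Gsh b c x = dtrace G b c x - partial b (dlnq q c) x.
Proof.
move=> Ux cG conjG conjGsh.
have dgw i : has_partial b (fun y => g c i y * grad_ln g q i y) x.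
  exact: has_partialM (smooth_has_partial b (g_smooth c i) Ux) (has_partial_grad_ln b i Ux).
have term i : partial b (Gsh i c i) x
    = partial b (G i c i) x - partial b (fun y => g c i y * grad_ln g q i y) x.
  rewrite (partial_eq_on b oU Ux (fun y Uy => gauge_christoffelE i c i Uy conjG conjGsh)).
  exact: partialB (smooth_has_partial b (cG i c i) Ux) (dgw i).
rewrite /dtrace (eq_bigr _ (fun i _ => term i)) sumrB; congr (_ - _).
rewrite -(partial_sum_ord dgw).
by apply: partial_eq_on oU Ux _ => y Uy; exact: sum_g_grad_ln.
Qed.

Lemma dtrace_sym_gauge_dual {Gs : christoffel R n} :
  connection_on U Gs -> dtrace_sym U Gs <-> dtrace_sym U (gauge_dual q Gs).
Proof.
move=> cGs.
apply: (dtrace_sym_affine 1 (fun b c x => n.+1%:R * partial b (dlnq q c) x)).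
- exact: oner_neq0.
- by move=> x Ux b c; exact: (congr1 ( *%R n.+1%:R) (partial_dlnqC b c x Ux)).
by move=> x Ux b c; rewrite mul1r; exact: (dtrace_gauge_dual b c x cGs Ux).
Qed.

Lemma dtrace_sym_gauge_conjugate {G Gs Gsh : christoffel R n} :
  connection_on U G -> conjugate U G g Gs ->
  conjugate U Gsh (gauge_metric q g) (gauge_dual q Gs) ->
  dtrace_sym U G <-> dtrace_sym U Gsh.
Proof.
move=> cG conjG conjGsh.
apply: (dtrace_sym_affine 1 (fun b c x => - partial b (dlnq q c) x)).
- exact: oner_neq0.
- by move=> x Ux b c; exact: (congr1 -%R (partial_dlnqC b c x Ux)).
by move=> x Ux b c; rewrite mul1r; exact: (dtrace_gauge_conjugate b c Ux cG conjG conjGsh).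
Qed.

End GaugeTransformation.

Section GaugeMetric.
Context {R : realType} {n : nat} {U : set 'rV[R]_n} {g : metric_comp R n}.

Lemma gauge_metric_sym (q : 'rV[R]_n -> R) :
  (forall i j x, U x -> g i j x = g j i x) ->
  forall i j x, U x -> gauge_metric q g i j x = gauge_metric q g j i x.
Proof. by move=> g_sym i j x Ux; rewrite /gauge_metric g_sym. Qed.

Lemma det_gauge_metric_neq0 {q : 'rV[R]_n -> R} :
  (forall x, U x -> q x != 0) -> (forall x, U x -> \det (gmat g x) != 0) ->
  forall x, U x -> \det (gmat (gauge_metric q g) x) != 0.
Proof.
move=> q_neq0 g_det x Ux.
have -> : gmat (gauge_metric q g) x = q x *: gmat g x by apply/matrixP => i j; rewrite !mxE.
by rewrite detZ mulf_neq0 ?expf_neq0 ?q_neq0 ?g_det.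
Qed.

Lemma torsion_free_gauge_dual (q : 'rV[R]_n -> R) {Gs : christoffel R n} :
  torsion_free U Gs -> torsion_free U (gauge_dual q Gs).
Proof. by move=> tGs i j k y Uy; rewrite /gauge_dual tGs //; ring. Qed.

End GaugeMetric.

Theorem proposition9p5 (R : realType) (n : nat) (U : set 'rV[R]_n)
    (g : metric_comp R n) (G Gs Gsh : christoffel R n) (q : 'rV[R]_n -> R) :
  (3 <= n)%N ->
  open U ->
  pseudo_riemannian U g ->
  connection_on U G -> connection_on U Gs ->
  torsion_free U G -> torsion_free U Gs ->
  conjugate U G g Gs ->
  smooth_on U q -> (forall x, U x -> 0 < q x) ->
  conjugate U Gsh (gauge_metric q g) (gauge_dual q Gs) ->
  [<-> pi3_vanishes U G g;
       pi3_vanishes U Gs g;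
       pi3_vanishes U Gsh (gauge_metric q g);
       pi3_vanishes U (gauge_dual q Gs) (gauge_metric q g)].
Proof.
move=> _ oU [g_smooth g_sym g_det] cG cGs tG tGs conjG q_smooth q_gt0 conjGsh.
have q_neq0 x : U x -> q x != 0 by move=> Ux; rewrite gt_eqF ?q_gt0.
have gq_sym := gauge_metric_sym q g_sym.
have gq_det := det_gauge_metric_neq0 q_neq0 g_det.
have tGsh := torsion_free_gauge_christoffel g_smooth g_sym g_det q_smooth q_neq0
  tG conjG conjGsh.
have pi3G := pi3_vanishesE oU tG g_sym g_det.
have pi3Gs := pi3_vanishesE oU tGs g_sym g_det.
have pi3Gsh := pi3_vanishesE oU tGsh gq_sym gq_det.
have pi3Gd := pi3_vanishesE oU (torsion_free_gauge_dual q tGs) gq_sym gq_det.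
have G_Gs := dtrace_sym_conjugate oU g_smooth g_det cG cGs tG tGs conjG.
have G_Gsh := dtrace_sym_gauge_conjugate oU g_smooth g_sym g_det q_smooth q_neq0
  cG conjG conjGsh.
have Gs_Gd := dtrace_sym_gauge_dual oU q_smooth q_neq0 cGs.
tfae => H.
- by apply/pi3Gs; apply/G_Gs; apply/pi3G.
- by apply/pi3Gsh; apply/G_Gsh; apply/G_Gs; apply/pi3Gs.
- by apply/pi3Gd; apply/Gs_Gd; apply/G_Gs; apply/G_Gsh; apply/pi3Gsh.
- by apply/pi3G; apply/G_Gs; apply/Gs_Gd; apply/pi3Gd.
Qed.
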